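(* For every positive integer $n$, $$\Psi_{\mathbb{Z}_n}(x)=\sum_{d\mid n}\mu\!\left(\frac nd\right)\left((1+x^2)^{\lfloor\frac{d-1}{2}\rfloor}(1+x)^{\frac{1+(-1)^d}{2}}-1\right),$$ and hence $$\mathcal{E}(\mathbb{Z}_n)=\Psi_{\mathbb{Z}_n}(1)=\sum_{d\mid n}\mu\!\left(\frac nd\right)\left(2^{\lfloor d/2\rfloor}-1\right),$$ where $\mu$ is the number-theoretic Möbius function.
   Context: For a finite group $\mathcal{A}$ with identity $e$, let $G(\mathcal{A})=\{\Omega\subseteq\mathcal{A}:\Omega^{-1}=\Omega,\ \langle\Omega\rangle=\mathcal{A},\ e\notin\Omega\}$. For $k\ge1$ let $a_k(\mathcal{A})$ be the number of orbits of the inner automorphism group $\mathrm{Inn}(\mathcal{A})$ (acting by $\alpha\cdot\Omega=\alpha(\Omega)$) on $\{\Omega\in G(\mathcal{A}):|\Omega|=k\}$; $\Psi_{\mathcal{A}}(x)=\sum_{k=1}^{|\mathcal{A}|-1}a_k(\mathcal{A})x^k$ and $\mathcal{E}(\mathcal{A})=\Psi_{\mathcal{A}}(1)$. For the cyclic (abelian) group $\mathbb{Z}_n$, $\mathrm{Inn}$ is trivial, so $a_k(\mathbb{Z}_n)$ is the number of inverse-closed generating subsets of $\mathbb{Z}_n\setminus\{0\}$ of size $k$. *)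

From HB Require Import structures.
From mathcomp Require Import all_boot all_order all_algebra all_fingroup.
Set Implicit Arguments. Unset Strict Implicit. Unset Printing Implicit Defensive.
Import GRing.Theory Num.Theory.

Definition Gsets (gT : finGroupType) : {set {set gT}} :=
  [set Om : {set gT} | [&& (Om^-1)%g == Om, <<Om>>%g == [set: gT] & (1%g \notin Om)]].

(* a_k(A): number of orbits of Inn(A) (i.e. of conjugation by elements of A,
   acting on subsets via 'Js) on the members of G(A) of size k *)
Definition a_k (gT : finGroupType) (k : nat) : nat :=
  #|[set orbit 'Js [set: gT] Om | Om in [set Om in Gsets gT | #|Om| == k]]|.

Definition Psi (gT : finGroupType) : {poly int} :=
  (\sum_(1 <= k < #|gT|) (a_k gT k)%:R *: 'X^k)%R.

Definition Eval (gT : finGroupType) : int := (Psi gT).[1]%R.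

Definition mobius (n : nat) : int :=
  if all (fun p => logn p n == 1%N) (primes n) then ((-1) ^+ size (primes n))%R else 0%R.

From HB Require Import structures.
From mathcomp Require Import all_boot all_order all_algebra all_fingroup.
From mathcomp Require Import zify.
Import GRing.Theory.

Set Implicit Arguments.
Unset Strict Implicit.
Unset Printing Implicit Defensive.

(* Z_N is abelian, so Inn(Z_N) is trivial and Psi_{Z_N}(x) is simply the sum
   of x^|Om| over the nonempty members Om of G(Z_N) (Psi_abelian).  A subset
   Om of Z_N generates Z_N iff gcd(N, Om) = 1 (generated_gcd); by the divisor
   sum identity of the Moebius function this indicator equals
   sum_{e | N} mu(e) [Om is contained in eZ_N] (generated_mobius).  Exchanging
   the sums, Psi = sum_{e | N} mu(e) (S_e - 1), where S_e counts the
   inverse-closed subsets of eZ_N \ {0} and -1 removes the empty set.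
   In any group, the inverse-closed subsets of an inverse-closed set M are the
   unions of the pairs {t, t^-1} over subsets of a "half" T of M meeting every
   pair once, so their generating polynomial is prod_{t in T} (1 + x^|{t,t^-1}|)
   (inv_closed_genfun).  For M = eZ_N \ {0} and d = N/e the half
   {t : 0 < t <= N/2} has (d-1)/2 pairs of size 2 and one fixed point iff d is
   even, so S_e = (1+x^2)^((d-1)/2) (1+x)^[d even] (multiples_genfun).
   Reindexing e = N/d and evaluating at x = 1 gives both formulas. *)

Lemma mobius_prod n :
  mobius n = (\prod_(p <- primes n) (if logn p n == 1%N then -1 else 0))%R.
Proof.
rewrite /mobius; elim: (primes n) => [|p s IH]; first by rewrite big_nil.
rewrite big_cons -IH /=; case: (logn p n == 1%N); case: (all _ s);
  by rewrite ?mul0r ?mulr0 ?exprS ?mulN1r.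
Qed.

Lemma mobius_prime_coprime p e : prime p -> (0 < e)%N -> ~~ (p %| e)%N ->
  mobius (p * e) = (- mobius e)%R.
Proof.
move=> p_pr e_gt0 p_ndv_e; have p_gt0 := prime_gt0 p_pr.
have lognp0 : logn p e = 0%N by rewrite lognE p_pr e_gt0 (negPf p_ndv_e).
have primesM_p : perm_eq (primes (p * e)) (p :: primes e).
  apply: uniq_perm; rewrite ?primes_uniq //=.
    by rewrite primes_uniq andbT mem_primes p_pr e_gt0 p_ndv_e.
  by move=> q; rewrite primesM // primes_prime // !inE.
rewrite !mobius_prod (perm_big _ primesM_p) big_cons lognM // logn_prime //.
rewrite eqxx lognp0 /= mulN1r; congr (- _)%R; apply: eq_big_seq => q.
rewrite mem_primes => /and3P[q_pr _ q_dv_e].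
have q_neq_p : q != p by apply: contraNneq p_ndv_e => <-.
by rewrite lognM // logn_prime // (negPf q_neq_p).
Qed.

Lemma mobius_prime_dvd p e : prime p -> (0 < e)%N -> (p %| e)%N -> mobius (p * e) = 0%R.
Proof.
move=> p_pr e_gt0 p_dv_e; have p_gt0 := prime_gt0 p_pr.
rewrite /mobius; case: allP => // /(_ p).
rewrite mem_primes p_pr muln_gt0 p_gt0 e_gt0 dvdn_mulr // lognM // logn_prime //.
have lognp_gt0 : (0 < logn p e)%N by rewrite logn_gt0 mem_primes p_pr e_gt0 p_dv_e.
by rewrite eqxx add1n eqSS (gtn_eqF lognp_gt0) => /(_ isT).
Qed.

Lemma sum_divisors_prime {R : nmodType} (F : nat -> R) {p g : nat} :
  prime p -> (0 < g)%N -> (p %| g)%N ->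
  (\sum_(e <- divisors g) F e =
   \sum_(e <- divisors (g %/ p) | ~~ (p %| e)%N) F e
     + \sum_(e <- divisors (g %/ p)) F (p * e)%N)%R.
Proof.
move=> p_pr g_gt0 p_dv_g; have p_gt0 := prime_gt0 p_pr.
set h := (g %/ p)%N; have gE : g = (p * h)%N by rewrite mulnC divnK.
have h_gt0 : (0 < h)%N by move: g_gt0; rewrite gE muln_gt0 => /andP[].
rewrite (bigID (fun e => p %| e)%N) [LHS]addrC /=; congr (_ + _)%R.
  rewrite -[LHS]big_filter -[RHS]big_filter; apply: perm_big.
  apply: uniq_perm => [||e]; rewrite ?filter_uniq ?divisors_uniq //.
  rewrite !mem_filter -!dvdn_divisors //; case: (boolP (p %| e)%N) => //= p_ndv_e.
  by rewrite gE Gauss_dvdr // coprime_sym prime_coprime.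
rewrite -big_filter -(big_map (muln p) xpredT); apply: perm_big; apply: uniq_perm.
- by rewrite filter_uniq ?divisors_uniq.
- rewrite map_inj_uniq ?divisors_uniq // => x y /eqP.
  by rewrite eqn_pmul2l // => /eqP.
move=> e; rewrite mem_filter -dvdn_divisors //; apply/andP/mapP => [[/dvdnP[k ->] k_dv]|].
  exists k; last by rewrite mulnC.
  by rewrite -dvdn_divisors // -(dvdn_pmul2l p_gt0) -gE mulnC.
by case=> k; rewrite -dvdn_divisors // => k_dv ->; rewrite dvdn_mulr // gE dvdn_pmul2l.
Qed.

Lemma mobius_divisor_sum g : (0 < g)%N ->
  (\sum_(e <- divisors g) mobius e = (g == 1%N)%:R)%R.
Proof.
move=> g_gt0; have [->|g_neq1] := eqVneq g 1%N; first by rewrite big_seq1.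
have p_pr : prime (pdiv g) by rewrite pdiv_prime // ltn_neqAle eq_sym g_neq1.
have h_gt0 : (0 < g %/ pdiv g)%N by rewrite divn_gt0 ?pdiv_gt0 // dvdn_leq // pdiv_dvd.
have dvd_gt0 e : e \in divisors (g %/ pdiv g) -> (0 < e)%N.
  by rewrite -dvdn_divisors //; apply: dvdn_gt0.
rewrite (sum_divisors_prime mobius p_pr g_gt0 (pdiv_dvd g)).
rewrite [X in (_ + X)%R](bigID (fun e => pdiv g %| e)%N) /=.
rewrite [X in (_ + (X + _))%R]big1_seq => [|e /andP[p_dv_e /dvd_gt0 e_gt0]]; last first.
  exact: mobius_prime_dvd.
rewrite add0r -big_split big1_seq // => e /andP[p_ndv_e /dvd_gt0 e_gt0] /=.
by rewrite mobius_prime_coprime // addrN.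
Qed.

Lemma divn_complement n d : (0 < n)%N -> (d %| n)%N -> (n %/ (n %/ d))%N = d.
Proof. by move=> n_gt0 d_dv_n; rewrite divnA // mulKn. Qed.

Lemma sum_divisors_complement (R : nmodType) (F : nat -> R) n : (0 < n)%N ->
  (\sum_(e <- divisors n) F e = \sum_(d <- divisors n) F (n %/ d)%N)%R.
Proof.
move=> n_gt0; rewrite -(big_map (fun d => n %/ d)%N xpredT); apply: perm_big.
have compl_inj : {in divisors n &, injective (fun d => n %/ d)%N}.
  move=> x y; rewrite -!dvdn_divisors // => x_dv y_dv xy.
  by rewrite -(divn_complement n_gt0 x_dv) xy divn_complement.
apply: uniq_perm; rewrite ?divisors_uniq ?map_inj_in_uniq ?divisors_uniq // => e.
apply/idP/mapP => [|[d d_dv ->]]; last by rewrite -dvdn_divisors // dvdn_div // dvdn_divisors.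
rewrite -dvdn_divisors // => e_dv; exists (n %/ e)%N; last by rewrite divn_complement.
by rewrite -dvdn_divisors // dvdn_div.
Qed.

Lemma sum_subsets_prod (R : comPzSemiRingType) (I : finType) (T : {set I}) (f : I -> R) :
  (\sum_(U : {set I} | U \subset T) \prod_(t in U) f t = \prod_(t in T) (1 + f t))%R.
Proof.
pose F t := if t \in T then f t else 0%R.
have := @bigA_distr _ 0%R 1%R *%R +%R _ F (fun=> 1%R).
rewrite (bigID (fun U : {set I} => U \subset T)) /=.
rewrite [X in (_ + X)%R]big1 ?addr0 => [distr|U /subsetPn[t tU tT]]; last first.
  by rewrite (bigD1 t) //= tU /F (negPf tT) mul0r.
have -> : (\prod_(t in T) (1 + f t) = \prod_t (F t + 1))%R.
  rewrite [RHS](bigID (mem T)) /= [X in (_ * X)%R]big1 ?mulr1 => [|t tT]; last first.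
    by rewrite /F (negPf tT) add0r.
  by apply: eq_bigr => t tT; rewrite /F tT addrC.
rewrite distr; apply: eq_bigr => U UT; rewrite -big_mkcond.
by apply: eq_bigr => t tU; rewrite /F (subsetP UT).
Qed.

Lemma sum_nonempty_sets (R : nzRingType) (T : finType) (P : pred {set T}) : P set0 ->
  (\sum_(A : {set T} | P A && (A != set0)) 'X^#|A| =
   \sum_(A : {set T} | P A) 'X^#|A| - 1 :> {poly R})%R.
Proof. by move=> P0; rewrite [X in (_ = X - _)%R](bigD1 set0) //= cards0 expr0 addrC addrK. Qed.

(* (1 + x^2)^((d-1)/2) (1 + x)^[d even]: the generating polynomial of the
   inverse-closed subsets of Z_d \ {0}. *)
Definition sym_subsets_poly (R : nzRingType) (d : nat) : {poly R} :=
  ((1 + 'X ^+ 2) ^+ (d.-1)./2 * (1 + 'X) ^+ (~~ odd d))%R.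

Section InverseClosedSubsets.
Local Open Scope group_scope.
Variables (gT : finGroupType) (M T : {set gT}).
Hypothesis M_invClosed : {in M, forall x, x^-1 \in M}.
Hypothesis T_subM : T \subset M.
Hypothesis T_covers : {in M, forall x, (x \in T) || (x^-1 \in T)}.
Hypothesis T_selfinv : {in T, forall x, x^-1 \in T -> x^-1 = x}.

(* U |-> U :|: U^-1 and Om |-> Om :&: T are mutually inverse bijections
   between subsets of T and inverse-closed subsets of M. *)
Lemma symmetrize_meet (U : {set gT}) : U \subset T -> (U :|: U^-1) :&: T = U.
Proof.
move=> UT; apply/setP => x; rewrite !inE.
case xU: (x \in U); first by rewrite (subsetP UT).
apply/negbTE/andP => -[/= x'U xT]; move: xU.
by rewrite -(T_selfinv xT (subsetP UT _ x'U)) x'U.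
Qed.

Lemma meet_symmetrize (Om : {set gT}) :
  Om^-1 = Om -> Om \subset M -> (Om :&: T) :|: (Om :&: T)^-1 = Om.
Proof.
move=> OmV OmM; apply/setP => x; rewrite !inE -mem_invg OmV.
case xOm: (x \in Om) => //=.
exact: T_covers (subsetP OmM _ xOm).
Qed.

Lemma inv_closed_reindex (R : nmodType) (F : {set gT} -> R) :
  (\sum_(Om : {set gT} | (Om^-1 == Om)%g && (Om \subset M)) F Om =
   \sum_(U : {set gT} | U \subset T) F (U :|: U^-1)%g)%R.
Proof.
rewrite (reindex_onto (fun U => U :|: U^-1) (fun Om => Om :&: T)) => [|Om /andP[/eqP OmV OmM]].
  apply: eq_bigl => U; apply/idP/idP => [/andP[_ /eqP <-]|UT]; first exact: subsetIr.
  rewrite symmetrize_meet // eqxx andbT invUg invgK setUC eqxx /= subUset.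
  rewrite (subset_trans UT T_subM) /=; apply/subsetP => x; rewrite inE => x'U.
  by rewrite -(invgK x) M_invClosed // (subsetP T_subM) // (subsetP UT).
exact: meet_symmetrize.
Qed.

(* The pairs {t, t^-1}, t in T, are disjoint, so sizes add up. *)
Lemma card_symmetrize (U : {set gT}) :
  U \subset T -> #|U :|: U^-1| = (\sum_(t in U) #|[set t; t^-1]|)%N.
Proof.
move=> UT; under eq_bigr => t _ do rewrite cards2 eq_sym.
have fixedE : U :&: U^-1 = [set t in U | t^-1 == t].
  apply/setP => t; rewrite !inE; case tU: (t \in U) => //=.
  apply/idP/eqP => [t'U|->]; last by [].
  exact: T_selfinv (subsetP UT _ tU) (subsetP UT _ t'U).
have fixed_count : #|[set t in U | t^-1 == t]| = (\sum_(t in U) (t^-1 == t))%N.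
  rewrite -sum1_card (eq_bigl (fun t => (t \in U) && (t^-1 == t))) => [|t]; last by rewrite inE.
  by rewrite big_mkcondr; apply: eq_bigr => t _; case: eqP.
have pair_count : (\sum_(t in U) (t^-1 != t).+1 + \sum_(t in U) (t^-1 == t) = #|U| + #|U|)%N.
  rewrite -big_split /= (eq_bigr (fun=> 2)) => [|t _]; last by case: eqP.
  by rewrite sum_nat_const muln2 addnn.
by apply/eqP; rewrite -(eqn_add2r #|U :&: U^-1|) cardsUI card_invg fixedE fixed_count pair_count.
Qed.

Lemma inv_closed_genfun (R : comNzRingType) :
  (\sum_(Om : {set gT} | (Om^-1 == Om)%g && (Om \subset M)) 'X^#|Om| =
   \prod_(t in T) (1 + 'X^#|[set t; (t^-1)%g]|) :> {poly R})%R.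
Proof.
rewrite inv_closed_reindex -sum_subsets_prod; apply: eq_bigr => U UT.
by rewrite card_symmetrize // prodrXr.
Qed.

End InverseClosedSubsets.

(* The cyclic group Z_N, N = m + 1, as the additive group 'I_N. *)
Section CyclicGroup.
Local Open Scope group_scope.
Variable m : nat.
Local Notation N := m.+1.

Lemma val_invg_pos (x : 'I_N) : (0 < x)%N -> val x^-1 = (N - x)%N.
Proof. by move=> x_gt0; rewrite /= modn_small //; have := ltn_ord x; lia. Qed.

Lemma nonzero_val (x : 'I_N) : (x != 1) = (0 < x)%N.
Proof. by rewrite lt0n; congr negb; apply/eqP/eqP => [->|x0] //; apply: val_inj. Qed.

Lemma inZpD a b : inZp (a + b) = inZp a * inZp b :> 'I_N.
Proof. by apply: val_inj; rewrite /= modnDm. Qed.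

Lemma inZpM a k : inZp (a * k) = inZp a ^+ k :> 'I_N.
Proof. by apply: val_inj; rewrite Zp_expg /= modnMml. Qed.

(* Subgroups of Z_N are closed under gcd, by Bezout's identity. *)
Lemma inZp_gcd_mem (K : {group 'I_N}) a b :
  inZp a \in K -> inZp b \in K -> inZp (gcdn a b) \in K.
Proof.
have [-> _|a_gt0 Ka Kb] := posnP a; first by rewrite gcd0n.
have [ka kb def_g _] := egcdnP b a_gt0.
have -> : inZp (gcdn a b) = (inZp (kb * b))^-1 * inZp (ka * a) :> 'I_N.
  by rewrite def_g inZpD mulKg.
by rewrite groupM ?groupV // mulnC inZpM groupX.
Qed.

Definition multiples (e : nat) : {set 'I_N} := [set x : 'I_N | (e %| x)%N].

Lemma multiples_group e : (e %| N)%N -> group_set (multiples e).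
Proof.
move=> e_dv_N; apply/group_setP; split=> [|x y]; rewrite !inE ?dvdn0 //=.
by move=> e_dv_x e_dv_y; rewrite /dvdn (modn_dvdm _ e_dv_N) -/(e %| x + y)%N dvdn_add.
Qed.

Definition gcd_set (Om : {set 'I_N}) : nat := gcdn N (\big[gcdn/0]_(x in Om) x).

Lemma dvdn_gcd_set e Om : (e %| gcd_set Om)%N = (e %| N)%N && (Om \subset multiples e).
Proof.
rewrite dvdn_gcd; congr (_ && _); apply/dvdn_biggcdP/subsetP => Om_e x xOm.
  by rewrite inE Om_e.
by have := Om_e x xOm; rewrite inE.
Qed.

Lemma generated_gcd (Om : {set 'I_N}) : (<<Om>> == [set: 'I_N]) = (gcd_set Om == 1%N).
Proof.
apply/eqP/eqP => [genT | g_eq1].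
  have g_dv_N : (gcd_set Om %| N)%N by apply: dvdn_gcdl.
  have Om_g : Om \subset Group (multiples_group g_dv_N).
    by have := dvdnn (gcd_set Om); rewrite dvdn_gcd_set => /andP[].
  have [m0|m_gt0] := posnP m; first by apply/eqP; rewrite -dvdn1 -m0.
  move: Om_g; rewrite -gen_subG genT => /subsetP /(_ (inZp 1) (in_setT _)).
  by rewrite inE /= modn_small // dvdn1 => /eqP.
have g_mem : inZp (gcd_set Om) \in <<Om>>.
  apply: inZp_gcd_mem; first by have -> : inZp N = 1 :> 'I_N by apply: val_inj; rewrite /= modnn.
  apply: (big_ind (fun k => inZp k \in <<Om>>)) => [|a b|x xOm].
  - by have -> : inZp 0 = 1 :> 'I_N by apply: val_inj; rewrite /= mod0n.
  - exact: inZp_gcd_mem.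
  - by rewrite valZpK mem_gen.
apply/setP => x; rewrite inE -(Zp1_expgz x) groupX //.
by move: g_mem; rewrite g_eq1.
Qed.

Lemma generated_mobius (Om : {set 'I_N}) :
  ((<<Om>> == [set: 'I_N])%:R : int)%R =
  (\sum_(e <- divisors N) mobius e * (Om \subset multiples e)%:R)%R.
Proof.
rewrite generated_gcd -mobius_divisor_sum ?gcdn_gt0 //.
under [RHS]eq_bigr => e _ do rewrite mulr_natr mulrb.
rewrite -[RHS]big_mkcond -[RHS]big_filter; apply: perm_big; apply: uniq_perm.
- exact: divisors_uniq.
- by rewrite filter_uniq ?divisors_uniq.
move=> e; rewrite mem_filter -!dvdn_divisors ?gcdn_gt0 //.
by rewrite dvdn_gcd_set andbC.
Qed.

Section HalfOfMultiples.
Variable e : nat.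
Hypothesis e_dv_N : (e %| N)%N.
Local Notation d := (N %/ e)%N.
Local Notation M := (multiples e :\ 1).

Definition half_multiples : {set 'I_N} :=
  [set t : 'I_N | [&& (e %| t)%N, (0 < t)%N & (2 * t <= N)%N]].
Local Notation T := half_multiples.

Lemma multiples_invClosed : {in M, forall x, x^-1 \in M}.
Proof.
move=> x; rewrite !inE invg_eq1 => /andP[-> e_dv_x] /=.
have : x \in Group (multiples_group e_dv_N) by rewrite inE.
by rewrite -groupV inE.
Qed.

Lemma half_subM : T \subset M.
Proof. by apply/subsetP => t; rewrite !inE nonzero_val => /and3P[-> -> _]. Qed.

Lemma half_covers : {in M, forall x, (x \in T) || (x^-1 \in T)}.
Proof.
move=> x xM; have := multiples_invClosed xM; move: xM; rewrite !inE !nonzero_val.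
move=> /andP[x_gt0 ->] /andP[_ ->] /=; rewrite x_gt0 modn_small; have := ltn_ord x; lia.
Qed.

Lemma half_selfinv : {in T, forall x, x^-1 \in T -> x^-1 = x}.
Proof.
move=> x; rewrite !inE => /and3P[_ x_gt0 x_le] /and3P[_ _].
by rewrite val_invg_pos // => x'_le; apply: val_inj; rewrite val_invg_pos //=; lia.
Qed.

Lemma half_pair_size t :
  t \in T -> #|[set t; t^-1]| = if (2 * t == N)%N then 1%N else 2%N.
Proof.
rewrite inE => /and3P[_ t_gt0 t_le]; rewrite cards2.
have -> : (t == t^-1) = (2 * t == N)%N.
  apply/eqP/eqP => [/(congr1 val)|t2]; first by rewrite val_invg_pos //=; lia.
  by apply: val_inj; rewrite val_invg_pos //=; lia.
by case: (2 * t == N)%N.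
Qed.

Lemma divisor_gt0 : (0 < e)%N.
Proof. exact: dvdn_gt0 (ltn0Sn m) e_dv_N. Qed.

Lemma ltn_mul_order k : (k * e < N)%N = (k < d)%N.
Proof. by rewrite -[(k < d)%N](ltn_pmul2r divisor_gt0) divnK. Qed.

Lemma eqn_mul_order k : (k * e == N)%N = (k == d)%N.
Proof. by rewrite -[(k == d)%N](eqn_pmul2r divisor_gt0) divnK. Qed.

(* The half consists of e, 2e, ..., (d-1)/2 * e, plus N/2 when d is even. *)
Lemma card_half_pairs : #|[set t in T | (2 * t != N)%N]| = (d.-1)./2.
Proof.
pose f (j : 'I_((d.-1)./2)) : 'I_N := inZp (e * j.+1).
have f_lt (j : 'I_((d.-1)./2)) : (2 * (e * j.+1) < N)%N.
  by rewrite mulnCA mulnC ltn_mul_order; have := ltn_ord j; lia.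
have f_val (j : 'I_((d.-1)./2)) : val (f j) = (e * j.+1)%N.
  by rewrite /= modn_small //; have := f_lt j; lia.
have -> : [set t in T | (2 * t != N)%N] = [set f j | j : 'I_((d.-1)./2)].
  apply/setP => t; rewrite !inE; apply/andP/imsetP => [|[j _ ->]].
    case=> /and3P[/dvdnP[k t_ke] t_gt0 t_le] t_ne.
    have k_gt0 : (0 < k)%N by move: t_gt0; rewrite t_ke muln_gt0 => /andP[].
    have k_lt : (k.-1 < (d.-1)./2)%N.
      have : (2 * k < d)%N by rewrite -ltn_mul_order -mulnA -t_ke ltn_neqAle t_ne.
      lia.
    by exists (Ordinal k_lt) => //; apply: val_inj; rewrite f_val /= prednK // mulnC.
  rewrite f_val dvdn_mulr //= muln_gt0 divisor_gt0 /=; have := f_lt j; lia.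
rewrite card_imset ?card_ord // => i j /(congr1 val); rewrite !f_val => /eqP.
by rewrite eqn_pmul2l ?divisor_gt0 // => /eqP [ij]; apply: val_inj.
Qed.

Lemma card_half_fixed : #|[set t in T | (2 * t == N)%N]| = ~~ odd d.
Proof.
have [d_odd|d_even] /= := boolP (odd d).
  apply/eqP; rewrite cards_eq0; apply/eqP/setP => t; rewrite !inE.
  apply/negP => /andP[/and3P[/dvdnP[k t_ke] _ _] t2].
  have : (2 * k == d)%N by rewrite -eqn_mul_order -mulnA -t_ke.
  by move: d_odd; lia.
have d_gt0 : (0 < d)%N by rewrite -ltn_mul_order mul0n.
pose t0 : 'I_N := inZp (e * d./2).
have t0_val : val t0 = (e * d./2)%N.
  by rewrite /= modn_small // mulnC ltn_mul_order; lia.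
have t0_fixed : (2 * t0 == N)%N.
  by rewrite t0_val mulnCA mulnC eqn_mul_order; apply/eqP; lia.
have -> : [set t in T | (2 * t == N)%N] = [set t0].
  apply/setP => t; rewrite !inE; apply/idP/eqP => [/andP[_ /eqP t2]|->].
    by apply: ord_inj; move/eqP: t0_fixed; lia.
  rewrite t0_fixed t0_val dvdn_mulr //= muln_gt0 divisor_gt0 /= andbT.
  by move/eqP: t0_fixed; rewrite t0_val; lia.
exact: cards1.
Qed.

Lemma multiples_genfun (R : comNzRingType) :
  (\sum_(Om : {set 'I_N} | (Om^-1 == Om)%g && (Om \subset M)) 'X^#|Om| =
   sym_subsets_poly R d)%R.
Proof.
rewrite (inv_closed_genfun multiples_invClosed half_subM half_covers half_selfinv).
rewrite (bigID (fun t : 'I_N => 2 * t == N)%N) /= mulrC.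
congr (_ * _)%R.
  rewrite -card_half_pairs -prodr_const; apply: eq_big => [t|t]; first by rewrite inE.
  by case/andP=> tT /negPf t2; rewrite half_pair_size // t2.
rewrite -card_half_fixed -prodr_const; apply: eq_big => [t|t]; first by rewrite inE.
by case/andP=> tT t2; rewrite half_pair_size // t2 expr1.
Qed.

End HalfOfMultiples.

End CyclicGroup.

Lemma orbit_Js_abelian (gT : finGroupType) (Om : {set gT}) :
  abelian [set: gT] -> orbit 'Js [set: gT] Om = [set Om].
Proof.
move=> abelT; apply/setP => S; rewrite inE; apply/imsetP/eqP => [[y _ ->]|->]; last first.
  by exists 1%g; rewrite ?inE //= conjsg1.
apply/normP; apply: (subsetP (cent_sub Om)).
exact: subsetP (subset_trans abelT (centS (subsetT Om))) y (in_setT y).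
Qed.

Lemma a_k_abelian (gT : finGroupType) k : abelian [set: gT] ->
  a_k gT k = #|[set Om in Gsets gT | #|Om| == k]|.
Proof.
move=> abelT; rewrite /a_k (eq_imset (g := set1)) => [|Om]; last exact: orbit_Js_abelian.
by rewrite card_imset //; apply: set1_inj.
Qed.

Lemma sum_pick_nat (R : nmodType) (c n : nat) (x : R) : (c < n)%N ->
  (\sum_(1 <= k < n) (if c == k then x else 0) = if (0 < c)%N then x else 0)%R.
Proof.
move=> c_lt_n; have [->|c_gt0] := posnP c.
  by rewrite big1_seq // => k; case: eqP => // <-; rewrite mem_index_iota.
rewrite (bigD1_seq c) ?mem_index_iota ?c_gt0 ?iota_uniq //= eqxx big1 ?addr0 //.
by move=> k; rewrite eq_sym => /negPf ->.
Qed.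

(* For abelian A, Psi_A is the generating polynomial of the nonempty members
   of G(A) (they are proper subsets, as they avoid the identity). *)
Lemma Psi_abelian (gT : finGroupType) : abelian [set: gT] ->
  Psi gT = (\sum_(Om in Gsets gT | Om != set0) 'X^#|Om|)%R.
Proof.
move=> abelT.
have coefE k : ((a_k gT k)%:R *: 'X^k =
    \sum_(Om in Gsets gT) if #|Om| == k then 'X^#|Om| else 0 :> {poly int})%R.
  rewrite a_k_abelian // scaler_nat -sumr_const -big_mkcondr.
  by apply: eq_big => [Om|Om]; rewrite inE // => /andP[_ /eqP ->].
rewrite /Psi (eq_bigr _ (fun k _ => coefE k)) exchange_big big_mkcondr.
apply: eq_bigr => Om; rewrite inE => /and3P[_ _ notin1].
rewrite (eq_bigr (fun k => if #|Om| == k then 'X^#|Om| else 0)%R) //.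
rewrite sum_pick_nat ?card_gt0 // -(cardsT gT) proper_card // properT.
by apply: contraNneq notin1 => ->; rewrite inE.
Qed.

Lemma Psi_cyclic_mobius m :
  Psi 'I_m.+1 =
  (\sum_(e <- divisors m.+1) (mobius e)%:P * (sym_subsets_poly int (m.+1 %/ e) - 1))%R.
Proof.
pose sym_no1 (Om : {set 'I_m.+1}) := (Om^-1 == Om)%g && (1%g \notin Om).
have gen_split : (\sum_(Om in Gsets 'I_m.+1 | Om != set0) 'X^#|Om| =
    \sum_(Om | sym_no1 Om && (Om != set0)) ((<<Om>>%g == setT)%:R)%:P * 'X^#|Om| :> {poly int})%R.
  rewrite [LHS]big_mkcond [RHS]big_mkcond; apply: eq_bigr => Om _; rewrite inE /sym_no1.
  case: (_ == [set: _]); first by rewrite andbA polyC1 mul1r.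
  by rewrite andbF /= polyC0 mul0r if_same.
rewrite Psi_abelian ?Zp_abelian // gen_split.
under eq_bigr => Om _ do rewrite generated_mobius rmorph_sum mulr_suml.
rewrite exchange_big; apply: eq_big_seq => e; rewrite -dvdn_divisors // => e_dv_N.
have set0_sym : (set0^-1 == set0 :> {set 'I_m.+1})%g.
  by apply/eqP/setP => x; rewrite !inE.
rewrite -(multiples_genfun e_dv_N) -sum_nonempty_sets ?set0_sym ?sub0set //.
rewrite big_distrr [LHS]big_mkcond [RHS]big_mkcond; apply: eq_bigr => Om _ /=.
rewrite subsetD1 /sym_no1 polyCM -mulrA.
case: (Om \subset _); rewrite ?polyC1 ?mul1r ?polyC0 ?mul0r ?mulr0 ?if_same //=.
by rewrite andbF.
Qed.

(* S(1) = 2^((d-1)/2) * 2^[d even] = 2^(d/2). *)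
Lemma sym_subsets_poly_at1 d :
  (0 < d)%N -> ((sym_subsets_poly int d).[1] = (2 ^ d./2)%:Z)%R.
Proof.
move=> d_gt0; rewrite /sym_subsets_poly hornerM !horner_exp !hornerD hornerC hornerX.
rewrite hornerXn expr1n -exprD (_ : (1 + 1 : int)%R = 2%:R)%R // -natrX natz.
by congr (Posz (2 ^ _)); lia.
Qed.

Theorem corollary3p2 (n : nat) (hn : (0 < n)%N) :
  Psi 'I_n.-1.+1 =
    (\sum_(d <- divisors n)
       (mobius (n %/ d))%:P *
       (((1 + 'X ^+ 2) ^+ (d.-1)./2 * (1 + 'X) ^+ (~~ odd d) - 1)))%R
  /\ Eval 'I_n.-1.+1 = (Psi 'I_n.-1.+1).[1]%R
  /\ Eval 'I_n.-1.+1 =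
    (\sum_(d <- divisors n) mobius (n %/ d) * ((2 ^ d./2)%:Z - 1))%R.
Proof.
case: n hn => // m _ /=.
have PsiE : Psi 'I_m.+1 =
    (\sum_(d <- divisors m.+1) (mobius (m.+1 %/ d))%:P * (sym_subsets_poly int d - 1))%R.
  rewrite Psi_cyclic_mobius (sum_divisors_complement _ (ltn0Sn m)).
  by apply: eq_big_seq => d; rewrite -dvdn_divisors // => d_dv; rewrite divn_complement.
split=> //; split=> //.
rewrite /Eval PsiE horner_sum; apply: eq_big_seq => d; rewrite -dvdn_divisors // => d_dv.
by rewrite hornerM hornerC hornerD hornerN hornerC sym_subsets_poly_at1 ?(dvdn_gt0 _ d_dv).
Qed.
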